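(* Fix an association $\kappa$ in which every UE is served by at least one cell and every cell serves at least one UE, and fix a demand vector $\bm{d}\in\mathbb{R}^m_{>0}$. Let $\bm{p}\in\mathbb{R}^n_{>0}$, let $\alpha>1$, and set $\bm{p}'=\bm{p}/\alpha$. Let $\bm{x}$ be the fixed point $\bm{x}=\bm{f}(\bm{h}(\bm{x},\bm{p},\kappa),\bm{d},\kappa)$, and let $\bm{x}'$ be the fixed point $\bm{x}'=\bm{f}(\bm{h}(\bm{x}',\bm{p}',\kappa),\bm{d},\kappa)$. Then $x'_i<\alpha x_i$ for all $i\in\mathcal{I}$.
   Context: Cellular network model. $\mathcal{I}$ is a set of $n$ cells and $\mathcal{J}$ a set of $m$ UEs. For an association $\kappa\in\{0,1\}^{n\times m}$, let $\mathcal{I}_j=\{i:\kappa_{ij}=1\}$ and $\mathcal{J}_i=\{j:\kappa_{ij}=1\}$. $M,B>0$ are constants, $\sigma^2>0$ is the noise power and $g_{ij}>0$ are the channel gains. For $\bm{x}\in\mathbb{R}^n_{\ge0}$ and $\bm{p}\in\mathbb{R}^n_{>0}$: - $h_j(\bm{x},\bm{p},\kappa)=\dfrac{\sum_{i\in\mathcal{I}_j}p_ig_{ij}}{\sum_{k\in\mathcal{I}\setminus\mathcal{I}_j}p_kg_{kj}x_k+\sigma^2}$; - $f_i(\bm{\gamma},\bm{d},\kappa)=\sum_{j\in\mathcal{J}_i}\dfrac{d_j}{MB\log_2(1+\gamma_j)}$. It is known, and assumed here, that for fixed $\bm{p},\bm{d},\kappa$ the map $\bm{x}\mapsto\bm{f}(\bm{h}(\bm{x},\bm{p},\kappa),\bm{d},\kappa)$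 is a standard interference function with a unique fixed point in $\mathbb{R}^n_{\ge0}$. *)

From mathcomp Require Import all_boot all_order all_algebra.
From mathcomp Require Import all_classical all_reals all_analysis.
Import Order.TTheory GRing.Theory Num.Theory.
Local Open Scope ring_scope.

(* Cells are indexed by 'I_n, UEs by 'I_m; an association is kappa : 'I_n -> 'I_m -> bool. *)

Definition log2 {R : realType} (x : R) : R := ln x / ln 2.

Definition hfun {R : realType} {n m : nat} (kappa : 'I_n -> 'I_m -> bool)
  (g : 'I_n -> 'I_m -> R) (sigma2 : R) (x p : 'I_n -> R) (j : 'I_m) : R :=
  (\sum_(i < n | kappa i j) p i * g i j) /
  (\sum_(k < n | ~~ kappa k j) p k * g k j * x k + sigma2).

Definition ffun {R : realType} {n m : nat} (kappa : 'I_n -> 'I_m -> bool)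
  (M B : R) (gamma d : 'I_m -> R) (i : 'I_n) : R :=
  \sum_(j < m | kappa i j) d j / (M * B * log2 (1 + gamma j)).

Definition is_load_fixpoint {R : realType} {n m : nat} (kappa : 'I_n -> 'I_m -> bool)
  (g : 'I_n -> 'I_m -> R) (sigma2 M B : R) (p : 'I_n -> R) (d : 'I_m -> R)
  (x : 'I_n -> R) : Prop :=
  (forall i, 0 <= x i) /\
  (forall i, x i = ffun kappa M B (hfun kappa g sigma2 x p) d i).

From mathcomp Require Import all_boot all_order all_algebra.
From mathcomp Require Import all_classical all_reals all_analysis.
From mathcomp Require Import ring lra.
Import Order.TTheory GRing.Theory Num.Theory.
Local Open Scope ring_scope.

(** Let [c] be the largest ratio [x'_k / x_k], attained at a cell [i0], and
    suppose [c >= alpha]. Since [x' <= c x] and the powers are divided by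
    [alpha <= c], every UE [j] served by [i0] keeps an SINR [h'_j >= h_j / c].
    Strict concavity of [ln] gives [log2 (1 + h_j / c) > log2 (1 + h_j) / c]
    for [c > 1], so each term of [x'_i0] is strictly smaller than [c] times
    the corresponding term of [x_i0], whence [x'_i0 < c x_i0 = x'_i0]. *)

Lemma lt_ln1Dx {R : realType} (x : R) : -1 < x -> x != 0 -> ln (1 + x) < x.
Proof.
move=> x_gtN1 x_neq0; rewrite -[ltRHS]expRK ltr_ln ?posrE ?expR_gt0 //.
  exact: expR_gt1Dx.
by rewrite -ltrBlDl sub0r.
Qed.

Lemma ln_lt_subr1 {R : realType} (y : R) : 0 < y -> y != 1 -> ln y < y - 1.
Proof.
move=> y_gt0 y_neq1; rewrite -[y in ln y](subrKC 1).
by apply: lt_ln1Dx; rewrite ?subr_eq0 //; lra.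
Qed.

Lemma ln_conv_lt {R : realType} (w a b : R) :
  0 < w < 1 -> 0 < a -> 0 < b -> a != b ->
  w * ln a + (1 - w) * ln b < ln (w * a + (1 - w) * b).
Proof.
move=> /andP[w_gt0 w_lt1] a_gt0 b_gt0 a_neq_b.
set z := w * a + (1 - w) * b.
have z_gt0 : 0 < z by rewrite /z; nra.
have tangent u : 0 < u -> u != z -> ln u - ln z < u / z - 1.
  move=> u_gt0 u_neq_z; rewrite -ln_div ?posrE //.
  apply: ln_lt_subr1; first by rewrite divr_gt0.
  by apply: contra_neq u_neq_z => /divr1_eq.
have a_neq_z : a != z.
  by apply: contra_neq a_neq_b; rewrite /z => az; nra.
have b_neq_z : b != z.
  by apply: contra_neq a_neq_b; rewrite /z => bz; nra.
have tangents_sum : w * (a / z - 1) + (1 - w) * (b / z - 1) = 0.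
  by rewrite /z; field; rewrite gt_eqF.
have w'_gt0 : 0 < 1 - w by rewrite subr_gt0.
have lt_a := tangent a a_gt0 a_neq_z; rewrite -(ltr_pM2l w_gt0) in lt_a.
have lt_b := tangent b b_gt0 b_neq_z; rewrite -(ltr_pM2l w'_gt0) in lt_b.
lra.
Qed.

Lemma ln1D_div_lt {R : realType} (c t : R) : 1 < c -> 0 < t ->
  ln (1 + t) / c < ln (1 + t / c).
Proof.
move=> c_gt1 t_gt0.
have c_gt0 : 0 < c by lra.
have -> : 1 + t / c = c^-1 * (1 + t) + (1 - c^-1) * 1.
  by field; rewrite gt_eqF.
have := @ln_conv_lt _ c^-1 (1 + t) 1; rewrite ln1 mulr0 addr0 mulrC.
by apply; rewrite ?invr_gt0 ?invf_lt1 ?gt_eqF //; lra.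
Qed.

Lemma log2_gt0 {R : realType} (a : R) : 1 < a -> 0 < log2 a.
Proof. by move=> a_gt1; rewrite /log2 divr_gt0 ?ln_gt0 ?ltr1n. Qed.

Lemma ler_log2 {R : realType} (a b : R) : 0 < a -> a <= b -> log2 a <= log2 b.
Proof.
move=> a_gt0 a_le_b; rewrite /log2 ler_pM2r ?invr_gt0 ?ln_gt0 ?ltr1n //.
by rewrite ler_ln ?posrE // (lt_le_trans a_gt0).
Qed.

Lemma log2_1D_div_lt {R : realType} {c t : R} : 1 < c -> 0 < t ->
  log2 (1 + t) / c < log2 (1 + t / c).
Proof.
move=> c_gt1 t_gt0; rewrite /log2 mulrAC ltr_pM2r ?invr_gt0 ?ln_gt0 ?ltr1n //.
exact: ln1D_div_lt.
Qed.

Lemma psumr_gt0_ex {R : numDomainType} {I : finType} (P : pred I) (F : I -> R) :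
  (exists k, P k) -> (forall k, P k -> 0 < F k) -> 0 < \sum_(k | P k) F k.
Proof.
move=> [k Pk] F_gt0; rewrite (bigD1 k) //= ltr_pwDl ?F_gt0 //.
by rewrite sumr_ge0 // => i /andP[Pi _]; rewrite ltW ?F_gt0.
Qed.

Section LoadFixpoint.
Context {R : realType} {n m : nat} {kappa : 'I_n -> 'I_m -> bool}.
Context {g : 'I_n -> 'I_m -> R} {sigma2 M B : R} {d : 'I_m -> R}.
Hypotheses (M_gt0 : 0 < M) (B_gt0 : 0 < B) (sigma2_gt0 : 0 < sigma2).
Hypotheses (g_gt0 : forall i j, 0 < g i j) (d_gt0 : forall j, 0 < d j).
Hypothesis served : forall j, exists i, kappa i j.
Hypothesis serving : forall i, exists j, kappa i j.

Local Notation h := (hfun kappa g sigma2).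
Local Notation f := (ffun kappa M B).
Local Notation fixpoint := (is_load_fixpoint kappa g sigma2 M B).

Lemma interference_ge0 (q y : 'I_n -> R) j :
  (forall k, 0 < q k) -> (forall k, 0 <= y k) ->
  0 <= \sum_(k < n | ~~ kappa k j) q k * g k j * y k.
Proof.
move=> q_gt0 y_ge0; apply: sumr_ge0 => k _.
by rewrite !mulr_ge0 ?y_ge0 ?(ltW (q_gt0 k)) ?(ltW (g_gt0 k j)).
Qed.

Lemma signal_gt0 (q : 'I_n -> R) j :
  (forall k, 0 < q k) -> 0 < \sum_(i < n | kappa i j) q i * g i j.
Proof. by move=> q_gt0; apply: psumr_gt0_ex => // i _; rewrite mulr_gt0. Qed.

Lemma hfun_gt0 (q y : 'I_n -> R) j :
  (forall k, 0 < q k) -> (forall k, 0 <= y k) -> 0 < h y q j.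
Proof.
move=> q_gt0 y_ge0; rewrite /hfun divr_gt0 ?signal_gt0 //.
by rewrite ltr_wpDl ?interference_ge0.
Qed.

Lemma hfun_divp_ge (q y y' : 'I_n -> R) (a c : R) j :
  (forall k, 0 < q k) -> (forall k, 0 <= y k) -> (forall k, 0 <= y' k) ->
  0 < a <= c -> (forall k, y' k <= c * y k) ->
  h y q j / c <= h y' (fun k => q k / a) j.
Proof.
move=> q_gt0 y_ge0 y'_ge0 /andP[a_gt0 a_le_c] y'_le.
have c_gt0 : 0 < c by apply: lt_le_trans a_le_c.
have q'_gt0 k : 0 < q k / a by rewrite divr_gt0.
rewrite /hfun; set S := \sum_(i < n | _) q i * g i j.
set D := \sum_(k < n | _) q k * g k j * y k.
set D' := \sum_(k < n | _) q k / a * g k j * y' k.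
have D_ge0 : 0 <= D by apply: interference_ge0.
have D'_ge0 : 0 <= D' by apply: interference_ge0.
(* [h y' (q / a) = S / (a * (D' + sigma2))] and [a * (D' + sigma2) <= c * (D + sigma2)]. *)
have -> : \sum_(i < n | kappa i j) q i / a * g i j = S / a.
  by rewrite /S mulr_suml; apply: eq_bigr => i _; rewrite mulrAC.
have aD'_le : a * D' <= c * D.
  rewrite /D /D' !mulr_sumr ler_sum // => k _.
  rewrite mulrA mulrA [a * _]mulrC divfK ?gt_eqF // -mulrA [c * _]mulrCA.
  by rewrite mulrA ler_pM2l ?mulr_gt0.
rewrite -!mulrA -!invfM ler_pM2l ?signal_gt0 //.
rewrite lef_pV2 ?posrE ?mulr_gt0 ?ltr_wpDl // mulrDr mulrDl [D * c]mulrC.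
by rewrite lerD // mulrC ler_pM2l.
Qed.

Lemma ffun_lt_mul (gamma gamma' : 'I_m -> R) (c : R) i :
  1 < c -> (forall j, kappa i j -> 0 < gamma j /\ gamma j / c <= gamma' j) ->
  f gamma' d i < c * f gamma d i.
Proof.
move=> c_gt1 gamma_le; have c_gt0 : 0 < c by lra.
rewrite /ffun mulr_sumr; apply: ltr_sum => [|j /gamma_le [gamma_gt0 le_j]].
  by have [j kij] := serving i; apply/hasP; exists j; rewrite ?mem_index_enum.
have gamma'_gt0 : 0 < gamma' j by apply: lt_le_trans le_j; rewrite divr_gt0.
have L_gt0 : 0 < log2 (1 + gamma j) by rewrite log2_gt0 // ltrDl.
have L'_gt0 : 0 < log2 (1 + gamma' j) by rewrite log2_gt0 // ltrDl.
have L_lt : log2 (1 + gamma j) / c < log2 (1 + gamma' j).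
  apply: lt_le_trans (log2_1D_div_lt c_gt1 gamma_gt0) _.
  by rewrite ler_log2 ?lerD2l // ltr_wpDr ?divr_ge0 ?ltW.
have -> : c * (d j / (M * B * log2 (1 + gamma j))) =
          d j / (M * B * (log2 (1 + gamma j) / c)).
  by field; rewrite !gt_eqF.
have MB_gt0 : 0 < M * B by rewrite mulr_gt0.
rewrite ltr_pM2l // ltf_pV2 ?posrE ?(mulr_gt0 MB_gt0) ?(divr_gt0 L_gt0) //.
by rewrite ltr_pM2l.
Qed.

Lemma load_fixpoint_gt0 (p x : 'I_n -> R) :
  (forall k, 0 < p k) -> fixpoint p d x -> forall k, 0 < x k.
Proof.
move=> p_gt0 [x_ge0 x_fix] k; rewrite x_fix; apply: psumr_gt0_ex => // j _.
by rewrite divr_gt0 // (mulr_gt0 (mulr_gt0 M_gt0 B_gt0)) // log2_gt0 // ltrDl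
  hfun_gt0.
Qed.

Lemma load_fixpoint_divp_lt (p x x' : 'I_n -> R) (a c : R) :
  (forall k, 0 < p k) -> 0 < a <= c -> 1 < c ->
  fixpoint p d x -> fixpoint (fun k => p k / a) d x' ->
  (forall k, x' k <= c * x k) -> forall i, x' i < c * x i.
Proof.
move=> p_gt0 a_le_c c_gt1 [x_ge0 x_fix] [x'_ge0 x'_fix] x'_le i.
rewrite x'_fix x_fix; apply: ffun_lt_mul => // j _.
by rewrite hfun_gt0 ?hfun_divp_ge.
Qed.

End LoadFixpoint.

Theorem lemma4 (R : realType) (n m : nat)
  (kappa : 'I_n -> 'I_m -> bool) (g : 'I_n -> 'I_m -> R) (sigma2 M B : R)
  (d : 'I_m -> R) (p : 'I_n -> R) (alpha : R) (x x' : 'I_n -> R) :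
  0 < M -> 0 < B -> 0 < sigma2 -> (forall i j, 0 < g i j) ->
  (forall j, exists i, kappa i j) ->
  (forall i, exists j, kappa i j) ->
  (forall j, 0 < d j) ->
  (forall i, 0 < p i) ->
  1 < alpha ->
  is_load_fixpoint kappa g sigma2 M B p d x ->
  is_load_fixpoint kappa g sigma2 M B (fun i => p i / alpha) d x' ->
  forall i, x' i < alpha * x i.
Proof.
move=> M_gt0 B_gt0 sigma2_gt0 g_gt0 served serving d_gt0 p_gt0 alpha_gt1
  x_fix x'_fix i.
have x_gt0 := load_fixpoint_gt0 M_gt0 B_gt0 sigma2_gt0 g_gt0 d_gt0 served
  serving _ _ p_gt0 x_fix.
have [i0 _ ratio_max] := @arg_maxP _ R 'I_n i predT (fun k => x' k / x k) erefl.
set c := x' i0 / x i0 in ratio_max.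
have x'_le k : x' k <= c * x k by rewrite -ler_pdivrMr //; apply: ratio_max.
suff c_lt_alpha : c < alpha.
  by apply: le_lt_trans (x'_le i) _; rewrite ltr_pM2r.
rewrite ltNge; apply/negP => alpha_le_c.
have : x' i0 < c * x i0.
  apply: (load_fixpoint_divp_lt M_gt0 B_gt0 sigma2_gt0 g_gt0 d_gt0 served
    serving _ _ _ _ _ p_gt0 _ _ x_fix x'_fix x'_le).
    by rewrite alpha_le_c andbT; lra.
  exact: lt_le_trans alpha_gt1 alpha_le_c.
by rewrite /c divfK ?gt_eqF ?ltxx.
Qed.
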